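(* Let $K\subset\mathbb{R}^2$ be a convex set such that a maximal-area triangle $T$ contained in $K$ is an equilateral triangle of side length $1$ with barycenter at the origin $o$. Then every point $p\in\partial K$ is $(60^\circ,\tfrac12)$-bisecting in $K$.
   Context: For a convex set $C$ containing $o$ and $p\in\partial C$, $p$ is called $(\theta,\ell)$-bisecting if the unique isosceles triangle $T_p(\theta,\ell)$ with apex $p$, apex angle $\theta$, two equal sides of length $\ell$ emanating from $p$, and such that the segment $po$ internally bisects the apex angle, is contained in $C$. *)

From Stdlib Require Import Reals Lra.
Open Scope R_scope.

Definition pt : Type := (R * R)%type.

Definition padd (x y : pt) : pt := (fst x + fst y, snd x + snd y).
Definition pscale (k : R) (x : pt) : pt := (k * fst x, k * snd x).
Definition pnorm (x : pt) : R := sqrt (fst x * fst x + snd x * snd x).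
Definition pdist (x y : pt) : R := pnorm (padd x (pscale (-1) y)).
Definition origin : pt := (0, 0).

Definition rot (t : R) (x : pt) : pt :=
  (cos t * fst x - sin t * snd x, sin t * fst x + cos t * snd x).

Definition plane_convex (K : pt -> Prop) : Prop :=
  forall x y t, K x -> K y -> 0 <= t <= 1 ->
    K (padd (pscale (1 - t) x) (pscale t y)).

Definition plane_closed (K : pt -> Prop) : Prop :=
  forall p, (forall eps, 0 < eps -> exists x, K x /\ pdist p x < eps) -> K p.

Definition plane_boundary (K : pt -> Prop) (p : pt) : Prop :=
  forall eps, 0 < eps ->
    (exists x, K x /\ pdist p x < eps) /\ (exists x, ~ K x /\ pdist p x < eps).

Definition in_triangle (a b c x : pt) : Prop :=
  exists s t u, 0 <= s /\ 0 <= t /\ 0 <= u /\ s + t + u = 1 /\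
    x = padd (pscale s a) (padd (pscale t b) (pscale u c)).

Definition triangle_in (a b c : pt) (K : pt -> Prop) : Prop :=
  forall x, in_triangle a b c x -> K x.

Definition tri_area (a b c : pt) : R :=
  Rabs ((fst b - fst a) * (snd c - snd a) - (snd b - snd a) * (fst c - fst a)) / 2.

Definition max_area_triangle (K : pt -> Prop) (a b c : pt) : Prop :=
  triangle_in a b c K /\
  forall a' b' c', triangle_in a' b' c' K -> tri_area a' b' c' <= tri_area a b c.

Definition barycenter (a b c : pt) : pt := pscale (1/3) (padd a (padd b c)).

(* T_p(theta, l) relative to the center o: apex p, equal sides of length l
   in directions obtained by rotating the unit vector u from p towards o
   by +theta/2 and -theta/2 (so segment p o bisects the apex angle). *)
Definition Tp_v1 (o p : pt) (theta l : R) : pt :=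
  let u := pscale (/ pdist o p) (padd o (pscale (-1) p)) in
  padd p (pscale l (rot (theta / 2) u)).
Definition Tp_v2 (o p : pt) (theta l : R) : pt :=
  let u := pscale (/ pdist o p) (padd o (pscale (-1) p)) in
  padd p (pscale l (rot (- (theta / 2)) u)).

Definition bisecting (K : pt -> Prop) (o : pt) (theta l : R) (p : pt) : Prop :=
  p <> o /\ triangle_in p (Tp_v1 o p theta l) (Tp_v2 o p theta l) K.

(* Write p = al a + be b + ga c in barycentric coordinates with respect to the
   maximal triangle T = abc.  Replacing a vertex of T by p multiplies the area by
   |al|, |be| or |ga|, so maximality gives al, be, ga <= 1; and p, lying on the
   boundary of K, is not interior to T, so one coordinate is <= 0.  In these
   coordinates the two free vertices of T_p(60 deg, 1/2) are obtained by moving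
   every coordinate towards its cyclic successor (resp. predecessor) by the
   fraction k/2, where k = sqrt 3 / (3 |p|); the identity
   3 |p|^2 = al^2 + be^2 + ga^2 - al be - be ga - ga al gives k |3 l - 1| <= 2 for
   every coordinate l.  Under these constraints each moved point is an explicit
   convex combination of p and two vertices of T, hence lies in K. *)

From Stdlib Require Import Reals Lra Psatz Nsatz.
Open Scope R_scope.

Definition comb3 (s : R) (x : pt) (t : R) (y : pt) (u : R) (z : pt) : pt :=
  padd (pscale s x) (padd (pscale t y) (pscale u z)).

Definition sarea (a b c : pt) : R :=
  (fst b - fst a) * (snd c - snd a) - (snd b - snd a) * (fst c - fst a).

Definition pdot (x y : pt) : R := fst x * fst y + snd x * snd y.

Definition perp (x : pt) : pt := (- snd x, fst x).

Lemma pt_eq (x y : pt) : fst x = fst y -> snd x = snd y -> x = y.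
Proof. destruct x, y; simpl; intros; subst; reflexivity. Qed.

Ltac pt_ring := apply pt_eq; unfold comb3, padd, pscale, perp; simpl; ring.

Lemma comb3_cycle s x t y u z : comb3 s x t y u z = comb3 t y u z s x.
Proof. pt_ring. Qed.

Lemma comb3_swap s x t y u z : comb3 s x t y u z = comb3 s x u z t y.
Proof. pt_ring. Qed.

Lemma sarea_cycle a b c : sarea a b c = sarea b c a.
Proof. unfold sarea; ring. Qed.

Lemma sarea_swap a b c : sarea a c b = - sarea a b c.
Proof. unfold sarea; ring. Qed.

Lemma pnorm_sq x : pnorm x * pnorm x = pdot x x.
Proof. unfold pnorm, pdot; apply sqrt_sqrt; nra. Qed.

Lemma pnorm_ge0 x : 0 <= pnorm x.
Proof. apply sqrt_pos. Qed.

Lemma pdist_sym x y : pdist x y = pdist y x.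
Proof. unfold pdist, pnorm, padd, pscale; simpl; f_equal; ring. Qed.

Lemma pdist_origin_l x : pdist origin x = pnorm x.
Proof. unfold pdist, pnorm, padd, pscale, origin; simpl; f_equal; ring. Qed.

Lemma convex_comb3 K x y z s t u : plane_convex K -> K x -> K y -> K z ->
  0 <= s -> 0 <= t -> 0 <= u -> s + t + u = 1 -> K (comb3 s x t y u z).
Proof.
  intros HK Hx Hy Hz Hs Ht Hu Hsum.
  destruct (Req_dec (t + u) 0) as [H0 | H0].
  - replace (comb3 s x t y u z) with x by
      (apply pt_eq; unfold comb3, padd, pscale; simpl;
       replace s with 1 by lra; replace t with 0 by lra; replace u with 0 by lra; ring).
    exact Hx.
  - set (l := u / (t + u)).
    assert (Hl : u = l * (t + u)) by (unfold l; field; lra).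
    set (w := padd (pscale (1 - l) y) (pscale l z)).
    assert (Hw : K w) by (apply HK; auto; split; nra).
    replace (comb3 s x t y u z) with (padd (pscale (1 - (t + u)) x) (pscale (t + u) w)).
    + apply HK; auto; lra.
    + apply pt_eq; unfold w, l, comb3, padd, pscale; simpl;
        replace s with (1 - (t + u)) by lra; field; lra.
Qed.

Lemma triangle_in_convex K a b c : plane_convex K -> K a -> K b -> K c ->
  triangle_in a b c K.
Proof.
  intros HK Ha Hb Hc x (s & t & u & Hs & Ht & Hu & Hsum & ->).
  exact (convex_comb3 K a b c s t u HK Ha Hb Hc Hs Ht Hu Hsum).
Qed.

Lemma triangle_in_vertices a b c K : triangle_in a b c K -> K a /\ K b /\ K c.
Proof.
  intros H; repeat split; apply H.
  - exists 1, 0, 0; repeat split; try lra; pt_ring.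
  - exists 0, 1, 0; repeat split; try lra; pt_ring.
  - exists 0, 0, 1; repeat split; try lra; pt_ring.
Qed.

Lemma plane_boundary_closed K p : plane_closed K -> plane_boundary K p -> K p.
Proof. intros Hcl Hbd; apply Hcl; intros eps Heps; exact (proj1 (Hbd eps Heps)). Qed.

Lemma sarea_comb3 a b c p al be ga : p = comb3 al a be b ga c -> al + be + ga = 1 ->
  sarea p b c = al * sarea a b c /\ sarea a p c = be * sarea a b c /\
  sarea a b p = ga * sarea a b c.
Proof.
  intros -> Hsum; replace al with (1 - be - ga) by lra.
  unfold sarea, comb3, padd, pscale; simpl; repeat split; ring.
Qed.

Lemma comb3_sarea a b c z : sarea a b c <> 0 ->
  let S := sarea a b c in
  z = comb3 (sarea z b c / S) a (sarea a z c / S) b (sarea a b z / S) c /\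
  sarea z b c / S + sarea a z c / S + sarea a b z / S = 1.
Proof.
  intros HS S; unfold S in *; split.
  - apply pt_eq; unfold comb3, sarea, padd, pscale in *; simpl; field; auto.
  - unfold sarea in *; field; auto.
Qed.

Lemma sarea_lipschitz z p b c :
  Rabs (sarea z b c - sarea p b c) <= pdist z p * pdist b c.
Proof.
  destruct z as [z1 z2], p as [p1 p2], b as [b1 b2], c as [c1 c2].
  unfold sarea, pdist, pnorm, padd, pscale; simpl.
  set (e1 := z1 + -1 * p1); set (e2 := z2 + -1 * p2).
  set (v1 := b1 + -1 * c1); set (v2 := b2 + -1 * c2).
  rewrite <- sqrt_mult by nra.
  replace ((b1 - z1) * (c2 - z2) - (b2 - z2) * (c1 - z1) -
           ((b1 - p1) * (c2 - p2) - (b2 - p2) * (c1 - p1)))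
    with (e1 * v2 - e2 * v1) by (unfold e1, e2, v1, v2; ring).
  rewrite <- sqrt_Rsqr_abs; apply sqrt_le_1_alt.
  replace ((e1 * e1 + e2 * e2) * (v1 * v1 + v2 * v2))
    with ((e1 * v2 - e2 * v1) * (e1 * v2 - e2 * v1) + (e1 * v1 + e2 * v2) * (e1 * v1 + e2 * v2))
    by ring.
  pose proof (Rle_0_sqr (e1 * v1 + e2 * v2)); unfold Rsqr in *; lra.
Qed.

Lemma max_area_comb3_le1 K a b c p al be ga :
  plane_convex K -> max_area_triangle K a b c -> sarea a b c <> 0 -> K p ->
  p = comb3 al a be b ga c -> al + be + ga = 1 ->
  al <= 1 /\ be <= 1 /\ ga <= 1.
Proof.
  intros HK [HT Hmax] HS Kp Hp Hsum.
  destruct (triangle_in_vertices a b c K HT) as (Ka & Kb & Kc).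
  destruct (sarea_comb3 a b c p al be ga Hp Hsum) as (Eal & Ebe & Ega).
  assert (Hcoord : forall x y z l, triangle_in x y z K ->
            sarea x y z = l * sarea a b c -> l <= 1).
  { intros x y z l Hxyz E.
    pose proof (Hmax x y z Hxyz) as Hle; unfold tri_area in Hle; fold (sarea x y z) in Hle.
    fold (sarea a b c) in Hle; rewrite E, Rabs_mult in Hle.
    pose proof (Rabs_pos_lt _ HS); pose proof (Rle_abs l); nra. }
  repeat split.
  - apply (Hcoord p b c); [apply triangle_in_convex |]; auto.
  - apply (Hcoord a p c); [apply triangle_in_convex |]; auto.
  - apply (Hcoord a b p); [apply triangle_in_convex |]; auto.
Qed.

Lemma div_nonneg_of_close X S x m : S <> 0 -> Rabs (X - x * S) < m * Rabs S -> m <= x ->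
  0 <= X / S.
Proof.
  intros HS Hclose Hm.
  replace (X - x * S) with ((X / S - x) * S) in Hclose by (field; auto).
  rewrite Rabs_mult in Hclose.
  apply Rmult_lt_reg_r in Hclose; [| apply Rabs_pos_lt; auto].
  apply Rabs_def2 in Hclose; lra.
Qed.

Lemma comb3_pos_not_boundary K a b c p al be ga :
  triangle_in a b c K -> sarea a b c <> 0 ->
  p = comb3 al a be b ga c -> al + be + ga = 1 -> 0 < al -> 0 < be -> 0 < ga ->
  ~ plane_boundary K p.
Proof.
  intros HT HS Hp Hsum Hal Hbe Hga Hbd.
  set (S := sarea a b c) in *.
  set (m := Rmin al (Rmin be ga)).
  set (L := 1 + pdist b c + pdist c a + pdist a b).
  assert (HL : 1 <= L /\ pdist b c <= L /\ pdist c a <= L /\ pdist a b <= L).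
  { assert (Hd : forall x y, 0 <= pdist x y) by (intros; apply pnorm_ge0).
    unfold L; pose proof (Hd b c); pose proof (Hd c a); pose proof (Hd a b); lra. }
  assert (Hm : 0 < m /\ m <= al /\ m <= be /\ m <= ga).
  { unfold m; repeat split.
    - repeat apply Rmin_glb_lt; auto.
    - apply Rmin_l.
    - eapply Rle_trans; [apply Rmin_r | apply Rmin_l].
    - eapply Rle_trans; [apply Rmin_r | apply Rmin_r]. }
  (* By [sarea_lipschitz], no barycentric coordinate drops by [m] in this ball. *)
  assert (Heps : 0 < m * Rabs S / L)
    by (apply Rdiv_lt_0_compat; [apply Rmult_lt_0_compat; [| apply Rabs_pos_lt] |]; lra).
  destruct (Hbd _ Heps) as [_ (z & Kz & Hz)]; apply Kz, HT.
  rewrite pdist_sym in Hz.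
  assert (HzL : pdist z p * L < m * Rabs S).
  { replace (m * Rabs S) with (m * Rabs S / L * L) by (field; lra).
    apply Rmult_lt_compat_r; lra. }
  assert (Hclose : forall u v, pdist u v <= L ->
            Rabs (sarea z u v - sarea p u v) < m * Rabs S).
  { intros u v Huv.
    eapply Rle_lt_trans; [apply sarea_lipschitz |].
    assert (0 <= pdist z p) by apply pnorm_ge0.
    nra. }
  destruct (sarea_comb3 a b c p al be ga Hp Hsum) as (Eal & Ebe & Ega).
  destruct (comb3_sarea a b c z HS) as [Ez Hsumz].
  do 3 eexists; repeat split; [| | | exact Hsumz | exact Ez].
  - apply (div_nonneg_of_close _ _ al m); [exact HS | | tauto].
    rewrite <- Eal; apply Hclose; tauto.
  - apply (div_nonneg_of_close _ _ be m); [exact HS | | tauto].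
    rewrite <- Ebe, (sarea_cycle a z c), (sarea_cycle a p c); apply Hclose; tauto.
  - apply (div_nonneg_of_close _ _ ga m); [exact HS | | tauto].
    rewrite <- Ega, (sarea_cycle a b z), (sarea_cycle b z a), (sarea_cycle a b p),
      (sarea_cycle b p a); apply Hclose; tauto.
Qed.

(* The cyclic shift of barycentric coordinates that describes the vertices of
   T_p, see [Tp_centered_unit_triangle]. *)
Definition shift_comb3 (k al be ga : R) (a b c : pt) : pt :=
  comb3 (al - k / 2 * (al - be)) a (be - k / 2 * (be - ga)) b (ga - k / 2 * (ga - al)) c.

Lemma shift_comb3_cycle k al be ga a b c :
  shift_comb3 k al be ga a b c = shift_comb3 k be ga al b c a.
Proof. unfold shift_comb3; pt_ring. Qed.

Lemma shift_comb3_in_K_nonpos K a b c p al be ga k :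
  plane_convex K -> K a -> K b -> K c -> K p ->
  p = comb3 al a be b ga c -> al + be + ga = 1 ->
  al <= 0 -> be <= 1 -> ga <= 1 -> 0 < k ->
  k * Rabs (3 * al - 1) <= 2 -> k * Rabs (3 * be - 1) <= 2 ->
  K (shift_comb3 k al be ga a b c).
Proof.
  intros HK Ka Kb Kc Kp Hp Hsum Hal Hbe Hga Hk Hkal Hkbe.
  assert (Hkal' : k * (1 - 3 * al) <= 2).
  { rewrite Rabs_minus_sym in Hkal; pose proof (Rle_abs (1 - 3 * al)); nra. }
  assert (Hkbe' : k * (3 * be - 1) <= 2) by (pose proof (Rle_abs (3 * be - 1)); nra).
  unfold shift_comb3.
  destruct (Rle_lt_dec ga 0) as [Hga0 | Hga0].
  - replace ga with 0 in * by lra; replace al with 0 in * by lra; replace be with 1 in * by lra.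
    apply convex_comb3; auto; lra.
  - (* Since [ga > 0], [p, a, b] is a frame in which the shifted point has the
       barycentric coordinates [sp, ta, tb]. *)
    set (sp := (2 * ga - k * (ga - al)) / (2 * ga)).
    set (ta := k * (be * ga - al * al) / (2 * ga)).
    set (tb := k * (ga * ga - al * be) / (2 * ga)).
    replace (comb3 _ a _ b _ c) with (comb3 sp p ta a tb b)
      by (subst p; apply pt_eq; unfold comb3, padd, pscale, sp, ta, tb; simpl;
          replace be with (1 - al - ga) by lra; field; lra).
    apply convex_comb3; auto; try (apply Rle_mult_inv_pos; [| lra]).
    + destruct (Rle_lt_dec ga (1 / 3)).
      * assert (ga - al <= ga * (3 * be - 1)) by nra. nra.
      * assert (ga - al <= ga * (1 - 3 * al)) by nra. nra.
    + apply Rmult_le_pos; nra.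
    + apply Rmult_le_pos; nra.
    + unfold sp, ta, tb; replace be with (1 - al - ga) by lra; field; lra.
Qed.

Lemma shift_comb3_in_K K a b c p al be ga k :
  plane_convex K -> K a -> K b -> K c -> K p ->
  p = comb3 al a be b ga c -> al + be + ga = 1 ->
  al <= 1 -> be <= 1 -> ga <= 1 -> (al <= 0 \/ be <= 0 \/ ga <= 0) -> 0 < k ->
  k * Rabs (3 * al - 1) <= 2 -> k * Rabs (3 * be - 1) <= 2 -> k * Rabs (3 * ga - 1) <= 2 ->
  K (shift_comb3 k al be ga a b c).
Proof.
  intros HK Ka Kb Kc Kp Hp Hsum Hal Hbe Hga Hneg Hk Hkal Hkbe Hkga.
  destruct Hneg as [Hneg | [Hneg | Hneg]].
  - apply (shift_comb3_in_K_nonpos K a b c p); auto.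
  - rewrite shift_comb3_cycle.
    apply (shift_comb3_in_K_nonpos K b c a p); auto; [rewrite Hp, comb3_cycle |]; auto; lra.
  - rewrite shift_comb3_cycle, shift_comb3_cycle.
    apply (shift_comb3_in_K_nonpos K c a b p); auto;
      [rewrite Hp, comb3_cycle, comb3_cycle |]; auto; lra.
Qed.

(* No hypothesis [p <> origin]: for [p = origin] both sides are [p], through
   the junk value [/ 0 = 0]. *)
Lemma Tp_v1_origin p theta l :
  Tp_v1 origin p theta l =
  padd p (pscale (- l / pnorm p)
            (padd (pscale (cos (theta / 2)) p) (pscale (sin (theta / 2)) (perp p)))).
Proof.
  unfold Tp_v1, rot; rewrite pdist_origin_l.
  apply pt_eq; unfold padd, pscale, perp, origin; simpl; unfold Rdiv; ring.
Qed.

Lemma Tp_v2_origin p theta l :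
  Tp_v2 origin p theta l =
  padd p (pscale (- l / pnorm p)
            (padd (pscale (cos (theta / 2)) p) (pscale (- sin (theta / 2)) (perp p)))).
Proof.
  unfold Tp_v2, rot; rewrite pdist_origin_l, cos_neg, sin_neg.
  apply pt_eq; unfold padd, pscale, perp, origin; simpl; unfold Rdiv; ring.
Qed.

Definition centered_unit_triangle (a b c : pt) : Prop :=
  pdist a b = 1 /\ pdist b c = 1 /\ pdist c a = 1 /\ barycenter a b c = origin.

Lemma barycenter_cycle a b c : barycenter b c a = barycenter a b c.
Proof. unfold barycenter; pt_ring. Qed.

Lemma barycenter_swap a b c : barycenter a c b = barycenter a b c.
Proof. unfold barycenter; pt_ring. Qed.

Lemma centered_unit_triangle_cycle a b c :
  centered_unit_triangle a b c -> centered_unit_triangle b c a.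
Proof. intros (Hab & Hbc & Hca & Hbar); repeat split; auto; rewrite barycenter_cycle; auto. Qed.

Lemma centered_unit_triangle_swap a b c :
  centered_unit_triangle a b c -> centered_unit_triangle a c b.
Proof.
  intros (Hab & Hbc & Hca & Hbar); repeat split.
  - rewrite pdist_sym; exact Hca.
  - rewrite pdist_sym; exact Hbc.
  - rewrite pdist_sym; exact Hab.
  - rewrite barycenter_swap; exact Hbar.
Qed.

Lemma centered_unit_triangle_gram a b c : centered_unit_triangle a b c ->
  c = pscale (-1) (padd a b) /\ 3 * pdot a a = 1 /\ 3 * pdot b b = 1 /\ 6 * pdot a b = -1.
Proof.
  intros (Hab & Hbc & Hca & Hbar).
  assert (Hsq : forall x y, pdist x y = 1 ->
                pdot (padd x (pscale (-1) y)) (padd x (pscale (-1) y)) = 1).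
  { intros x y Hxy; rewrite <- pnorm_sq; unfold pdist in Hxy; rewrite Hxy; ring. }
  apply Hsq in Hab, Hbc, Hca.
  assert (Hc : c = pscale (-1) (padd a b)).
  { destruct a, b, c; unfold barycenter, origin, padd, pscale in *; simpl in *.
    injection Hbar as Hx Hy; f_equal; lra. }
  subst c.
  assert (E1 : pdot (padd a (pscale (-1) b)) (padd a (pscale (-1) b))
               = pdot a a + pdot b b - 2 * pdot a b)
    by (unfold pdot, padd, pscale; simpl; ring).
  assert (E2 : pdot (padd b (pscale (-1) (pscale (-1) (padd a b))))
                    (padd b (pscale (-1) (pscale (-1) (padd a b))))
               = pdot a a + 4 * pdot b b + 4 * pdot a b)
    by (unfold pdot, padd, pscale; simpl; ring).
  assert (E3 : pdot (padd (pscale (-1) (padd a b)) (pscale (-1) a))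
                    (padd (pscale (-1) (padd a b)) (pscale (-1) a))
               = 4 * pdot a a + pdot b b + 4 * pdot a b)
    by (unfold pdot, padd, pscale; simpl; ring).
  repeat split; lra.
Qed.

Lemma sarea_centered_unit_triangle a b c : centered_unit_triangle a b c ->
  sarea a b c * sarea a b c = 3 / 4.
Proof.
  intros Habc; destruct (centered_unit_triangle_gram a b c Habc) as (-> & Ha & Hb & Hab).
  assert (Lagrange : sarea a b (pscale (-1) (padd a b)) * sarea a b (pscale (-1) (padd a b))
                     = 9 * (pdot a a * pdot b b - pdot a b * pdot a b))
    by (unfold sarea, pdot, padd, pscale; simpl; ring).
  rewrite Lagrange; replace (pdot a a) with (1 / 3) by lra; replace (pdot b b) with (1 / 3) by lra;
    replace (pdot a b) with (- 1 / 6) by lra; field.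
Qed.

Lemma sqrt3_sq : sqrt 3 * sqrt 3 = 3.
Proof. apply sqrt_sqrt; lra. Qed.

Lemma sqrt3_pos : 0 < sqrt 3.
Proof. apply sqrt_lt_R0; lra. Qed.

Lemma perp_centered_unit_triangle a b c :
  centered_unit_triangle a b c -> 0 < sarea a b c ->
  perp a = pscale (sqrt 3 / 3) (padd b (pscale (-1) c)).
Proof.
  intros Habc Hpos.
  assert (HS : sarea a b c = sqrt 3 / 2).
  { pose proof (sarea_centered_unit_triangle a b c Habc) as Hsq.
    pose proof sqrt3_sq; pose proof sqrt3_pos.
    assert (Hfact : (sarea a b c - sqrt 3 / 2) * (sarea a b c + sqrt 3 / 2) = 0) by nra.
    apply Rmult_integral in Hfact as [Hfact | Hfact]; lra. }
  destruct (centered_unit_triangle_gram a b c Habc) as (-> & Ha & Hb & Hab).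
  destruct a as [a1 a2], b as [b1 b2]; unfold sarea, pdot, perp, padd, pscale in *; simpl in *.
  replace (sqrt 3 / 3) with (2 * (a1 * b2 - a2 * b1)) by lra.
  f_equal; nsatz.
Qed.

Lemma comb3_sq_le_pnorm a b c p al be ga : centered_unit_triangle a b c ->
  p = comb3 al a be b ga c -> al + be + ga = 1 ->
  (3 * al - 1) * (3 * al - 1) <= 12 * (pnorm p * pnorm p).
Proof.
  intros Habc -> Hsum; rewrite pnorm_sq.
  destruct (centered_unit_triangle_gram a b c Habc) as (-> & Ha & Hb & Hab).
  assert (E : 3 * pdot (comb3 al a be b ga (pscale (-1) (padd a b)))
                       (comb3 al a be b ga (pscale (-1) (padd a b)))
              = (al - ga) * (al - ga) * (3 * pdot a a) + (be - ga) * (be - ga) * (3 * pdot b b)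
                + (al - ga) * (be - ga) * (6 * pdot a b))
    by (unfold pdot, comb3, padd, pscale; simpl; ring).
  rewrite Ha, Hb, Hab in E.
  assert (D : 4 * ((al - ga) * (al - ga) + (be - ga) * (be - ga) - (al - ga) * (be - ga))
              - (3 * al - 1) * (3 * al - 1) = 3 * ((be - ga) * (be - ga)))
    by (replace al with (1 - be - ga) by lra; ring).
  pose proof (Rle_0_sqr (be - ga)); unfold Rsqr in *; lra.
Qed.

Lemma Tp_centered_unit_triangle a b c p al be ga :
  centered_unit_triangle a b c -> 0 < sarea a b c ->
  p = comb3 al a be b ga c -> al + be + ga = 1 -> pnorm p <> 0 ->
  let k := sqrt 3 / (3 * pnorm p) in
  Tp_v1 origin p (PI / 3) (1 / 2) = shift_comb3 k al be ga a b c /\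
  Tp_v2 origin p (PI / 3) (1 / 2) = shift_comb3 k al ga be a c b.
Proof.
  intros Habc Hpos Hp Hsum Hr k.
  pose proof (perp_centered_unit_triangle a b c Habc Hpos) as Ja.
  pose proof (perp_centered_unit_triangle b c a (centered_unit_triangle_cycle a b c Habc)
                ltac:(rewrite <- sarea_cycle; exact Hpos)) as Jb.
  pose proof (perp_centered_unit_triangle c a b
                (centered_unit_triangle_cycle b c a (centered_unit_triangle_cycle a b c Habc))
                ltac:(rewrite <- sarea_cycle, <- sarea_cycle; exact Hpos)) as Jc.
  assert (Jp : perp p = comb3 al (perp a) be (perp b) ga (perp c)) by (subst p; pt_ring).
  destruct (centered_unit_triangle_gram a b c Habc) as (Hc & _).
  rewrite Tp_v1_origin, Tp_v2_origin.
  replace (PI / 3 / 2) with (PI / 6) by field.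
  rewrite cos_PI6, sin_PI6, Jp, Ja, Jb, Jc.
  unfold k; clear k Ja Jb Jc Jp; set (r := pnorm p) in *; subst p c.
  replace ga with (1 - al - be) by lra.
  split; apply pt_eq; unfold shift_comb3, comb3, padd, pscale; simpl; field; lra.
Qed.

Lemma sqrt3_div_mul_Rabs_le r x : 0 < r -> x * x <= 12 * (r * r) ->
  sqrt 3 / (3 * r) * Rabs x <= 2.
Proof.
  intros Hr Hx.
  pose proof sqrt3_sq as H3; pose proof sqrt3_pos.
  assert (Habs : Rabs x <= 2 * sqrt 3 * r).
  { apply Rsqr_incr_0_var; [| nra].
    rewrite <- Rsqr_abs; unfold Rsqr; nra. }
  apply Rle_trans with (sqrt 3 / (3 * r) * (2 * sqrt 3 * r)).
  - apply Rmult_le_compat_l; [apply Rle_mult_inv_pos |]; lra.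
  - replace (sqrt 3 / (3 * r) * (2 * sqrt 3 * r)) with (2 * (sqrt 3 * sqrt 3) / 3)
      by (field; lra).
    rewrite H3; lra.
Qed.

Lemma bisecting_of_comb3 K a b c p al be ga :
  plane_convex K -> K a -> K b -> K c -> K p ->
  centered_unit_triangle a b c -> 0 < sarea a b c ->
  p = comb3 al a be b ga c -> al + be + ga = 1 ->
  al <= 1 -> be <= 1 -> ga <= 1 -> (al <= 0 \/ be <= 0 \/ ga <= 0) ->
  bisecting K origin (PI / 3) (1 / 2) p.
Proof.
  intros HK Ka Kb Kc Kp Habc Hpos Hp Hsum Hal Hbe Hga Hneg.
  assert (Hsq : forall l, l = al \/ l = be \/ l = ga ->
            (3 * l - 1) * (3 * l - 1) <= 12 * (pnorm p * pnorm p)).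
  { intros l [-> | [-> | ->]].
    - exact (comb3_sq_le_pnorm a b c p al be ga Habc Hp Hsum).
    - apply (comb3_sq_le_pnorm b c a p be ga al); [apply centered_unit_triangle_cycle | |]; auto.
      rewrite Hp; apply comb3_cycle. lra.
    - apply (comb3_sq_le_pnorm c a b p ga al be);
        [do 2 apply centered_unit_triangle_cycle | |]; auto.
      rewrite Hp, comb3_cycle; apply comb3_cycle. lra. }
  assert (Hr : 0 < pnorm p).
  { pose proof (pnorm_ge0 p).
    destruct Hneg as [Hl | [Hl | Hl]];
      [pose proof (Hsq al ltac:(tauto)) | pose proof (Hsq be ltac:(tauto))
      | pose proof (Hsq ga ltac:(tauto))]; nra. }
  split.
  - intros ->; unfold pnorm, origin in Hr; simpl in Hr.
    rewrite Rmult_0_l, Rplus_0_l, sqrt_0 in Hr; lra.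
  - destruct (Tp_centered_unit_triangle a b c p al be ga Habc Hpos Hp Hsum ltac:(lra))
      as [-> ->].
    assert (Hk : 0 < sqrt 3 / (3 * pnorm p))
      by (apply Rdiv_lt_0_compat; [apply sqrt3_pos | lra]).
    assert (Hkl : forall l, l = al \/ l = be \/ l = ga ->
              sqrt 3 / (3 * pnorm p) * Rabs (3 * l - 1) <= 2)
      by (intros; apply sqrt3_div_mul_Rabs_le; auto).
    apply triangle_in_convex; auto.
    + apply (shift_comb3_in_K K a b c p); auto.
    + apply (shift_comb3_in_K K a c b p); auto; [rewrite Hp; apply comb3_swap | lra | tauto].
Qed.

Theorem lemma3p2 (K : pt -> Prop) (a b c : pt) :
  plane_convex K -> plane_closed K ->
  max_area_triangle K a b c ->
  pdist a b = 1 -> pdist b c = 1 -> pdist c a = 1 ->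
  barycenter a b c = origin ->
  forall p, plane_boundary K p -> bisecting K origin (PI / 3) (1 / 2) p.
Proof.
  intros HK Hcl Hmax Hab Hbc Hca Hbar p Hbd.
  assert (Habc : centered_unit_triangle a b c) by (repeat split; auto).
  destruct (triangle_in_vertices a b c K (proj1 Hmax)) as (Ka & Kb & Kc).
  pose proof (plane_boundary_closed K p Hcl Hbd) as Kp.
  assert (HS : sarea a b c <> 0).
  { intros E; pose proof (sarea_centered_unit_triangle a b c Habc); rewrite E in *; lra. }
  destruct (comb3_sarea a b c p HS) as [Hp Hsum].
  set (al := sarea p b c / sarea a b c) in *; set (be := sarea a p c / sarea a b c) in *;
    set (ga := sarea a b p / sarea a b c) in *.
  destruct (max_area_comb3_le1 K a b c p al be ga HK Hmax HS Kp Hp Hsum) as (Hal & Hbe & Hga).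
  assert (Hneg : al <= 0 \/ be <= 0 \/ ga <= 0).
  { destruct (Rle_lt_dec al 0) as [| Hal0]; [now left |].
    destruct (Rle_lt_dec be 0) as [| Hbe0]; [now right; left |].
    destruct (Rle_lt_dec ga 0) as [| Hga0]; [now right; right |].
    exfalso; exact (comb3_pos_not_boundary K a b c p al be ga (proj1 Hmax) HS Hp Hsum
                      Hal0 Hbe0 Hga0 Hbd). }
  destruct (Rlt_le_dec 0 (sarea a b c)) as [Hpos | Hnpos].
  - exact (bisecting_of_comb3 K a b c p al be ga HK Ka Kb Kc Kp Habc Hpos Hp Hsum Hal Hbe Hga Hneg).
  - apply (bisecting_of_comb3 K a c b p al ga be); auto; try lra; try tauto.
    + apply centered_unit_triangle_swap; auto.
    + rewrite sarea_swap; lra.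
    + rewrite Hp; apply comb3_swap.
Qed.
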